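(* Let $(K,\mathrm{val})$ be a $2$-henselian valued field whose residue class field $F$ has characteristic $\neq2$, let $A$ be a subring with $B\subseteq A\subseteq K$, let $g\in G$, and let $M$ be a proper quasi-quadratic module in $F$ (i.e. $M\ne F$). Then $\Phi^A(M,[\![g]\!])$ is a quasi-quadratic module in $A$.
   Context: Let $(G,\le)$ be a totally ordered abelian group written multiplicatively with identity $e$; $G_{\ge e}=\{g\in G:g\ge e\}$, $G^2=\{g^2:g\in G\}$. Let $(K,\mathrm{val})$ be a valued field with surjective valuation $\mathrm{val}:K\to G\cup\{\infty\}$, valuation ring $B=\{x:\mathrm{val}(x)\ge e\}$, residue map $\pi:B\to F$, residue field $F$. A strict unit is $x\in B^\times$ with $\pi(x)=1$; when $\mathrm{char}F\ne2$, $2$-henselian is equivalent to every strict unit being a square in $K$. For a subring $A$ with $B\subseteq A\subseteq K$ put $H=\mathrm{val}(A^\times)$; $H$ is a convex subgroup of $G$ and $\mathrm{val}(A\setminus\{0\})=H\cup G_{\ge e}$. For $g\in G$: $\overline g$ is its class in $G/G^2$, $[\![g]\!]$ its class in $G/H^2$, $[g]$ its class in $G/H$; ''$\mathrm{val}(x)=\overline g$'' means $\overline{\mathrm{val}(x)}=\overline g$, and similarly for $[\![\cdot]\!]$ and $[\cdot]$. A quasi-quadratic module in a commutative ring $R$ is a subset $M\subseteq R$ with $M+M\subseteq M$ and $a^2M\subseteq M$ for all $a\in R$. A pseudo-angular component map is a map $\mathrm{p.an}:K^\times\to F^\times$ such that: (1) $\mathrm{p.an}(u)=\pi(u)$ for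 $u\in B^\times$; (2) $\mathrm{p.an}(ux)=\pi(u)\mathrm{p.an}(x)$ for $u\in B^\times,x\in K^\times$; (3) for all $g\in G$, $c\in F^\times$ there is $w\in K$ with $\mathrm{val}(w)=g$, $\mathrm{p.an}(w)=c$; (4) for nonzero $x_1,x_2$ with $x_1+x_2\ne0$: if $\mathrm{val}(x_1)<\mathrm{val}(x_2)$ then $\mathrm{p.an}(x_1+x_2)=\mathrm{p.an}(x_1)$; if $\mathrm{val}(x_1)=\mathrm{val}(x_2)$ and $\mathrm{p.an}(x_1)+\mathrm{p.an}(x_2)\ne0$ then $\mathrm{val}(x_1+x_2)=\mathrm{val}(x_1)$ and $\mathrm{p.an}(x_1+x_2)=\mathrm{p.an}(x_1)+\mathrm{p.an}(x_2)$; (5) if $x,y\in K^\times$, $\overline{\mathrm{val}(x)}=\overline{\mathrm{val}(y)}$ and $\mathrm{p.an}(x)=\mathrm{p.an}(y)$ then $y=u^2x$ for some $u\in K^\times$; (6) for $a,u\in K^\times$ there is $k\in F^\times$ with $\mathrm{p.an}(au^2)=\mathrm{p.an}(a)k^2$. Such a map exists under the hypotheses; fix one. For $g\in G$ and a quasi-quadratic module $M$ in $F$: $$\Phi^A(M,[\![g]\!])=\{x\in A\setminus\{0\}:\ \mathrm{val}(x)=\overline g,\ (\mathrm{val}(x)=[\![g]\!]\ \text{or}\ \mathrm{val}(x)>g),\ \mathrm{p.an}(x)\in M\}\cup\{0\}$$ (this depends only on $[\![g]\!]$). *)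

From HB Require Import structures.
From mathcomp Require Import all_boot all_order all_algebra.
Set Implicit Arguments. Unset Strict Implicit. Unset Printing Implicit Defensive.
Import GRing.Theory.
Local Open Scope ring_scope.

Record ordered_abelian_group := OAG {
  oag_car :> Type;
  gmul : oag_car -> oag_car -> oag_car;
  gone : oag_car;
  ginv : oag_car -> oag_car;
  gle : oag_car -> oag_car -> Prop;
  gmulA : forall x y z, gmul x (gmul y z) = gmul (gmul x y) z;
  gmulC : forall x y, gmul x y = gmul y x;
  gmul1 : forall x, gmul gone x = x;
  gmulV : forall x, gmul (ginv x) x = gone;
  gle_refl : forall x, gle x x;
  gle_trans : forall x y z, gle x y -> gle y z -> gle x z;
  gle_anti : forall x y, gle x y -> gle y x -> x = y;
  gle_total : forall x y, gle x y \/ gle y x;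
  gle_mul : forall x y z, gle x y -> gle (gmul x z) (gmul y z)
}.

Section Defs.
Variable G : ordered_abelian_group.

Definition glt (x y : G) : Prop := gle x y /\ x <> y.

(* order on G ∪ {∞}, with None = ∞ *)
Definition ole (a b : option G) : Prop :=
  match a, b with
  | _, None => True
  | None, Some _ => False
  | Some x, Some y => gle x y
  end.

Definition sq_class_eq (a b : G) : Prop := exists c : G, a = gmul b (gmul c c).

Definition sq_class_eq_in (S : G -> Prop) (a b : G) : Prop :=
  exists h : G, S h /\ a = gmul b (gmul h h).

Variables (K F : fieldType).

Definition is_valuation (val : K -> option G) : Prop :=
  [/\ forall x, val x = None <-> x = 0,
      forall x y a b, val x = Some a -> val y = Some b -> val (x * y) = Some (gmul a b),
      forall x y, ole (val x) (val (x + y)) \/ ole (val y) (val (x + y))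
    & forall g : G, exists x, val x = Some g].

Definition val_ring (val : K -> option G) (x : K) : Prop := ole (Some (gone G)) (val x).

Definition is_residue_map (val : K -> option G) (pi : K -> F) : Prop :=
  [/\ forall x y, val_ring val x -> val_ring val y -> pi (x + y) = pi x + pi y,
      forall x y, val_ring val x -> val_ring val y -> pi (x * y) = pi x * pi y,
      pi 1 = 1,
      forall c : F, exists x, val_ring val x /\ pi x = c
    & forall x, val_ring val x -> (pi x = 0 <-> ole (Some (gone G)) (val x) /\ val x <> Some (gone G))].

Definition strict_unit (val : K -> option G) (pi : K -> F) (x : K) : Prop :=
  val x = Some (gone G) /\ pi x = 1.

(* 2-henselian, in the form valid when char F <> 2 *)
Definition two_henselian (val : K -> option G) (pi : K -> F) : Prop :=
  forall x, strict_unit val pi x -> exists y : K, x = y ^+ 2.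

Definition is_subring (A : K -> Prop) : Prop :=
  [/\ A 0, A 1, forall x y, A x -> A y -> A (x - y) & forall x y, A x -> A y -> A (x * y)].

Definition unit_vals (val : K -> option G) (A : K -> Prop) (h : G) : Prop :=
  exists x, [/\ A x, x != 0, A x^-1 & val x = Some h].

Definition is_pseudo_angular (val : K -> option G) (pi : K -> F) (pan : K -> F) : Prop :=
  (forall x, x != 0 -> pan x != 0) /\
      (forall u, val u = Some (gone G) -> pan u = pi u) /\
      (forall u x, val u = Some (gone G) -> x != 0 -> pan (u * x) = pi u * pan x) /\
      (forall (g : G) (c : F), c != 0 -> exists w, val w = Some g /\ pan w = c) /\
      (forall x1 x2 a b, val x1 = Some a -> val x2 = Some b -> x1 + x2 != 0 ->
                 glt a b -> pan (x1 + x2) = pan x1) /\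
      (forall x1 x2 a, val x1 = Some a -> val x2 = Some a -> x1 + x2 != 0 ->
                 pan x1 + pan x2 != 0 ->
                 val (x1 + x2) = Some a /\ pan (x1 + x2) = pan x1 + pan x2) /\
      (forall x y a b, val x = Some a -> val y = Some b -> sq_class_eq a b ->
                 pan x = pan y -> exists u, u != 0 /\ y = u ^+ 2 * x) /\
      (forall a u, a != 0 -> u != 0 -> exists k, k != 0 /\ pan (a * u ^+ 2) = pan a * k ^+ 2).

Definition qq_module (M : F -> Prop) : Prop :=
  (forall x y, M x -> M y -> M (x + y)) /\ (forall a x, M x -> M (a ^+ 2 * x)).

Definition qq_module_in (A : K -> Prop) (S : K -> Prop) : Prop :=
  [/\ forall x, S x -> A x,
      forall x y, S x -> S y -> S (x + y)
    & forall a x, A a -> S x -> S (a ^+ 2 * x)].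

Definition Phi (val : K -> option G) (A : K -> Prop) (pan : K -> F) (M : F -> Prop) (g : G)
  (x : K) : Prop :=
  x = 0 \/
  (A x /\ x != 0 /\ exists a : G,
     [/\ val x = Some a, sq_class_eq a g,
         sq_class_eq_in (unit_vals val A) a g \/ glt g a
       & M (pan x)]).

End Defs.

From mathcomp Require Import all_boot all_order all_algebra.
From mathcomp Require Import ring.
From Stdlib Require Import Classical.
Import GRing.Theory.
Local Open Scope ring_scope.
Set Implicit Arguments. Unset Strict Implicit. Unset Printing Implicit Defensive.

(* Write H = val(A^×) and call a ∈ G admissible (for g) when a ≡ g mod G^2 and
   (a ≡ g mod H^2 or a > g); Φ consists of 0 and the x ∈ A \ {0} with admissible
   value and p.an(x) ∈ M.  The proof has three independent ingredients.
   - Group theory: H is a convex subgroup of G, and for a convex subgroup the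
     admissible classes are stable under multiplication by b^2 whenever b ∈ H or
     b ≥ e.  Since val(A \ {0}) ⊆ H ∪ G_{≥e}, this gives closure of Φ under
     multiplication by squares of A, together with axiom (6) of p.an.
   - Field theory: a proper quasi-quadratic module M of F (char F ≠ 2) never
     contains both p and -p for p ≠ 0, because every t ∈ F is
     ((t/p+1)/2)^2 p + ((t/p-1)/2)^2 (-p).
   - Closure under addition: if val x ≠ val y the sum inherits value and p.an of
     the smaller term (axiom (4a)); if val x = val y, the previous point shows
     p.an x + p.an y ≠ 0, so axiom (4b) applies and M absorbs the sum.
   Henselianity and the residue map enter only through the existence of p.an;
   the argument itself uses just its axioms. *)

Section OrderedGroup.
Variable G : ordered_abelian_group.
Implicit Types a b c x y z h : G.

Lemma gmulr1 x : gmul x (gone G) = x.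
Proof. by rewrite gmulC gmul1. Qed.

Lemma gmulrV x : gmul x (ginv x) = gone G.
Proof. by rewrite gmulC gmulV. Qed.

Lemma gmulCA x y z : gmul x (gmul y z) = gmul y (gmul x z).
Proof. by rewrite !gmulA (gmulC x y). Qed.

Lemma gmulACA a b c d : gmul (gmul a b) (gmul c d) = gmul (gmul a c) (gmul b d).
Proof. by rewrite -!gmulA (gmulCA b). Qed.

Lemma ginvK x : ginv (ginv x) = x.
Proof. by rewrite -[RHS]gmul1 -(gmulV (ginv x)) -gmulA gmulV gmulr1. Qed.

Lemma gmul_sq_shift b g c :
  gmul (gmul b b) (gmul g (gmul c c)) = gmul g (gmul (gmul b c) (gmul b c)).
Proof. by rewrite gmulCA gmulACA. Qed.

Lemma gle_mull x y z : gle x y -> gle (gmul z x) (gmul z y).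
Proof. by rewrite !(gmulC z); apply: gle_mul. Qed.

Lemma gle_mull_cancel x y z : gle (gmul z x) (gmul z y) -> gle x y.
Proof. by move/(gle_mull (ginv z)); rewrite !gmulA gmulV !gmul1. Qed.

Lemma gle_mul2 a b c d : gle a b -> gle c d -> gle (gmul a c) (gmul b d).
Proof. by move=> hab hcd; apply: gle_trans (gle_mul c hab) (gle_mull b hcd). Qed.

Lemma glt_mull x y z : glt x y -> glt (gmul z x) (gmul z y).
Proof.
case=> hle hne; split; first exact: gle_mull.
by move/(congr1 (gmul (ginv z))); rewrite !gmulA gmulV !gmul1.
Qed.

Lemma glt_le_trans x y z : glt x y -> gle y z -> glt x z.
Proof.
move=> [hxy hne] hyz; split; first exact: gle_trans hyz.
by move=> exz; subst z; apply: hne; apply: gle_anti.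
Qed.

Lemma glt_nle x y : glt x y -> ~ gle y x.
Proof. by move=> [hxy hne] hyx; apply: hne; apply: gle_anti. Qed.

Lemma nglt_le x y : ~ glt x y -> gle y x.
Proof.
move=> nlt; case: (gle_total x y) => // hxy.
by case: (classic (x = y)) => [->|hne]; [exact: gle_refl | case: nlt].
Qed.

Lemma gle_inv x y : gle x y -> gle (ginv y) (ginv x).
Proof.
move/(gle_mul (gmul (ginv x) (ginv y))).
by rewrite gmulA gmulrV gmul1 gmulCA gmulrV gmulr1.
Qed.

Lemma ginv1 : ginv (gone G) = gone G.
Proof. by rewrite -[LHS]gmul1 gmulrV. Qed.

Lemma gle1_sq x : gle (gone G) x -> gle (gone G) (gmul x x).
Proof. by move=> hx; have := gle_mul2 hx hx; rewrite gmul1. Qed.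

Lemma glt1_sq x : glt (gone G) x -> glt (gone G) (gmul x x).
Proof.
move=> hx; apply: (glt_le_trans hx).
by have := gle_mull x (proj1 hx); rewrite gmulr1.
Qed.

End OrderedGroup.

Lemma sq_class_eq_mul_sq (G : ordered_abelian_group) (a b g : G) :
  sq_class_eq a g -> sq_class_eq (gmul (gmul b b) a) g.
Proof. by case=> c ->; exists (gmul b c); rewrite gmul_sq_shift. Qed.

Definition admissible (G : ordered_abelian_group) (H : G -> Prop) (g a : G) : Prop :=
  sq_class_eq a g /\ (sq_class_eq_in H a g \/ glt g a).

Section ConvexSubgroup.
Variables (G : ordered_abelian_group) (H : G -> Prop).
Hypothesis H_mul : forall h1 h2, H h1 -> H h2 -> H (gmul h1 h2).
Hypothesis H_inv : forall h, H h -> H (ginv h).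
Hypothesis H_convex : forall h h', H h -> gle (gone G) h' -> gle h' h -> H h'.

Lemma H_convex_below (h h' : G) : H h -> gle h h' -> gle h' (gone G) -> H h'.
Proof.
move=> Hh hle hle1; rewrite -(ginvK h'); apply/H_inv/(H_convex (H_inv Hh)).
- by rewrite -ginv1; apply: gle_inv.
- exact: gle_inv.
Qed.

Lemma H_sqrt (c : G) : H (gmul c c) -> H c.
Proof.
move=> Hcc; case: (gle_total (gone G) c) => hc.
  by apply: (H_convex Hcc hc); have := gle_mull c hc; rewrite gmulr1.
by apply: (H_convex_below Hcc _ hc); have := gle_mull c hc; rewrite gmulr1.
Qed.

(* Multiplying by the square of an element of H keeps a admissible: if a > g is
   lost, then e < c^2 ≤ b^{-2} for a = g c^2, so c ∈ H by convexity. *)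
Lemma admissible_mul_sq_in (g a b : G) :
  H b -> admissible H g a -> admissible H g (gmul (gmul b b) a).
Proof.
move=> Hb [Ca Ha]; split; first exact: sq_class_eq_mul_sq.
case: Ha => [[h [Hh ->]]|lt_ga].
  by left; exists (gmul b h); rewrite gmul_sq_shift; split; first exact: H_mul.
case: (classic (glt g (gmul (gmul b b) a))) => [|nlt]; first by right.
case: Ca lt_ga nlt => c -> lt_ga nlt; rewrite gmul_sq_shift in nlt *.
left; exists (gmul b c); split => //; apply/H_mul/H_sqrt => //.
have c2_ge1 : gle (gone G) (gmul c c).
  by apply: (@gle_mull_cancel _ _ _ g); rewrite gmulr1; case: lt_ga.
have b2c2_le1 : gle (gmul (gmul b b) (gmul c c)) (gone G).
  by rewrite -gmulACA; apply: (@gle_mull_cancel _ _ _ g); rewrite gmulr1; exact: nglt_le.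
apply: (H_convex (H_inv (H_mul Hb Hb)) c2_ge1).
by have := gle_mull (ginv (gmul b b)) b2c2_le1; rewrite gmulA gmulV gmul1 gmulr1.
Qed.

(* An element b ≥ e outside H exceeds every element of H, so multiplying by b^2
   pushes an admissible a strictly above g. *)
Lemma admissible_mul_sq_out (g a b : G) :
  gle (gone G) b -> ~ H b -> admissible H g a -> admissible H g (gmul (gmul b b) a).
Proof.
move=> b_ge1 Hb [Ca Ha]; split; first exact: sq_class_eq_mul_sq.
right; case: Ha => [[h [Hh ->]]|lt_ga].
  have bh_gt1 : glt (gone G) (gmul b h).
    apply: NNPP => /nglt_le bh_le1; apply: Hb; apply: H_convex (H_inv Hh) b_ge1 _.
    by have := gle_mul (ginv h) bh_le1; rewrite -gmulA gmulrV gmulr1 gmul1.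
  by rewrite gmul_sq_shift -{1}(gmulr1 g); apply: glt_mull; apply: glt1_sq.
by apply: glt_le_trans lt_ga _; have := gle_mul a (gle1_sq b_ge1); rewrite gmul1.
Qed.

Lemma admissible_mul_sq (g a b : G) :
  H b \/ gle (gone G) b -> admissible H g a -> admissible H g (gmul (gmul b b) a).
Proof.
case: (classic (H b)) => [Hb _|Hb [//|b_ge1]]; first exact: admissible_mul_sq_in.
exact: admissible_mul_sq_out.
Qed.

End ConvexSubgroup.

Section Subring.
Variables (K : fieldType) (A : K -> Prop).
Hypothesis A_subring : is_subring A.

Lemma subringN x : A x -> A (- x).
Proof. by case: A_subring => A0 _ AB _ Ax; rewrite -sub0r; apply: AB. Qed.

Lemma subringD x y : A x -> A y -> A (x + y).
Proof. by case: A_subring => _ _ AB _ Ax Ay; rewrite -[y]opprK; apply/AB/subringN. Qed.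

Lemma subringM x y : A x -> A y -> A (x * y).
Proof. by case: A_subring => _ _ _ AM; apply: AM. Qed.

End Subring.

Section Valuation.
Variables (G : ordered_abelian_group) (K : fieldType) (val : K -> option G).
Hypothesis val_valuation : is_valuation val.

Lemma val_some x : x != 0 -> exists a, val x = Some a.
Proof.
case: val_valuation => val0 _ _ _ nx; case Ex: (val x) => [a|]; first by exists a.
by move/val0: Ex nx => ->; rewrite eqxx.
Qed.

Lemma val_neq0 x a : val x = Some a -> x != 0.
Proof.
case: val_valuation => val0 _ _ _ Ex; apply/eqP => /val0.
by rewrite Ex.
Qed.

Lemma valM x y a b : val x = Some a -> val y = Some b -> val (x * y) = Some (gmul a b).
Proof. by case: val_valuation => _ valM _ _; apply: valM. Qed.

Lemma val1 : val 1 = Some (gone G).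
Proof.
have [d Ed] := val_some (oner_neq0 K).
have := valM Ed Ed; rewrite mulr1 Ed => -[dd].
by congr Some; rewrite -(gmulV d) {3}dd gmulA gmulV gmul1.
Qed.

Lemma valN x a : val x = Some a -> val (- x) = Some a.
Proof.
have [e Ee] : exists e, val (-1) = Some e by apply: val_some; rewrite oppr_eq0 oner_eq0.
have e1 : e = gone G.
  have := valM Ee Ee; rewrite mulrNN mulr1 val1 => -[ee].
  case: (gle_total (gone G) e) => he; have := gle_mull e he; rewrite gmulr1 -ee => he'.
    exact: gle_anti he' he.
  exact: gle_anti he he'.
by move=> Ex; rewrite -mulN1r (valM Ee Ex) e1 gmul1.
Qed.

Lemma valV x a : val x = Some a -> val x^-1 = Some (ginv a).
Proof.
move=> Ex; have nx := val_neq0 Ex.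
have [d Ed] := val_some (invr_neq0 nx).
have := valM Ex Ed; rewrite mulfV // val1 => -[ad].
by rewrite Ed -(gmul1 d) -(gmulV a) -gmulA -ad gmulr1.
Qed.

Lemma val_add_lt x y a b :
  val x = Some a -> val y = Some b -> glt a b -> x + y != 0 -> val (x + y) = Some a.
Proof.
move=> Ex Ey lt_ab nxy; have [c Ec] := val_some nxy.
case: val_valuation => _ _ ultra _.
have a_le_c : gle a c.
  case: (ultra x y); rewrite Ec ?Ex ?Ey //= => hbc.
  exact: gle_trans (proj1 lt_ab) hbc.
have c_le_a : gle c a.
  case: (ultra (x + y) (- y)); rewrite addrK ?Ec ?Ex ?(valN Ey) //= => hbc.
  by case: (glt_nle lt_ab hbc).
by rewrite Ec (gle_anti c_le_a a_le_c).
Qed.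

Section UnitValues.
Variable A : K -> Prop.
Hypothesis A_subring : is_subring A.
Hypothesis B_sub_A : forall x, val_ring val x -> A x.

Lemma unit_vals_mul h1 h2 :
  unit_vals val A h1 -> unit_vals val A h2 -> unit_vals val A (gmul h1 h2).
Proof.
move=> [x [Ax nx Aix Ex]] [y [Ay ny Aiy Ey]].
exists (x * y); split; [exact: subringM | exact: mulf_neq0 | | exact: valM].
by rewrite invfM; apply: subringM.
Qed.

Lemma unit_vals_inv h : unit_vals val A h -> unit_vals val A (ginv h).
Proof.
move=> [x [Ax nx Aix Ex]]; exists x^-1.
by split; rewrite ?invr_neq0 ?invrK //; apply: valV.
Qed.

(* Convexity: if e ≤ h' ≤ h = val x with x ∈ A^×, take y with val y = h';
   then y ∈ B ⊆ A and y^{-1} = x^{-1} (x y^{-1}) with x y^{-1} ∈ B. *)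
Lemma unit_vals_convex h h' :
  unit_vals val A h -> gle (gone G) h' -> gle h' h -> unit_vals val A h'.
Proof.
move=> [x [Ax nx Aix Ex]] h'_ge1 h'_le_h.
have [y Ey] : exists y, val y = Some h' by case: val_valuation => _ _ _; apply.
have ny := val_neq0 Ey.
exists y; split => //; first by apply: B_sub_A; rewrite /val_ring Ey.
have -> : y^-1 = x^-1 * (x * y^-1) by rewrite mulrA mulVf // mul1r.
apply: subringM => //; apply: B_sub_A; rewrite /val_ring (valM Ex (valV Ey)) /=.
by have := gle_mul (ginv h') h'_le_h; rewrite gmulrV.
Qed.

(* val(A \ {0}) ⊆ H ∪ G_{≥e}: a value ≤ e makes the inverse lie in B ⊆ A. *)
Lemma unit_vals_or_ge1 x b : A x -> val x = Some b -> unit_vals val A b \/ gle (gone G) b.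
Proof.
move=> Ax Ex; case: (gle_total (gone G) b) => [|b_le1]; first by right.
left; exists x; split => //; first exact: val_neq0 Ex.
apply: B_sub_A; rewrite /val_ring (valV Ex) /= -ginv1.
exact: gle_inv.
Qed.

Lemma admissible_unit_vals_mul_sq g a x b :
  A x -> val x = Some b -> admissible (unit_vals val A) g a ->
  admissible (unit_vals val A) g (gmul (gmul b b) a).
Proof.
move=> Ax Ex; apply: admissible_mul_sq.
- exact: unit_vals_mul.
- exact: unit_vals_inv.
- exact: unit_vals_convex.
- exact: unit_vals_or_ge1 Ex.
Qed.

End UnitValues.
End Valuation.

(* In characteristic ≠ 2 a proper quasi-quadratic module contains no pair p, -p
   with p ≠ 0: otherwise it would contain every t = s1^2 p + s2^2 (-p). *)
Lemma qq_module_no_opposite (F : fieldType) (M : F -> Prop) (p : F) :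
  (2 : F) != 0 -> qq_module M -> (exists c, ~ M c) -> p != 0 -> M p -> ~ M (- p).
Proof.
move=> two_nz [M_add M_sq] [t Mt] np Mp Mnp; apply: Mt.
have -> : t = ((t / p + 1) / 2) ^+ 2 * p + ((t / p - 1) / 2) ^+ 2 * (- p).
  by field; rewrite two_nz np.
by apply: M_add; apply: M_sq.
Qed.

Section PhiModule.
Variables (G : ordered_abelian_group) (K F : fieldType).
Variables (val : K -> option G) (pi pan : K -> F) (A : K -> Prop) (g : G) (M : F -> Prop).
Hypothesis val_valuation : is_valuation val.
Hypothesis two_nz : (2 : F) != 0.
Hypothesis A_subring : is_subring A.
Hypothesis B_sub_A : forall x, val_ring val x -> A x.
Hypothesis pan_axioms : is_pseudo_angular val pi pan.
Hypothesis M_qq : qq_module M.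
Hypothesis M_proper : exists c, ~ M c.

Local Notation Phi := (Phi val A pan M g).

Lemma pan_neq0 x : x != 0 -> pan x != 0.
Proof. by case: pan_axioms => h _; apply: h. Qed.

Lemma pan_add_lt x1 x2 a b :
  val x1 = Some a -> val x2 = Some b -> x1 + x2 != 0 -> glt a b -> pan (x1 + x2) = pan x1.
Proof. by case: pan_axioms => [_ [_ [_ [_ [h _]]]]]; apply: h. Qed.

Lemma pan_add_eq x1 x2 a :
  val x1 = Some a -> val x2 = Some a -> x1 + x2 != 0 -> pan x1 + pan x2 != 0 ->
  val (x1 + x2) = Some a /\ pan (x1 + x2) = pan x1 + pan x2.
Proof. by case: pan_axioms => [_ [_ [_ [_ [_ [h _]]]]]]; apply: h. Qed.

Lemma pan_mul_sq x u :
  x != 0 -> u != 0 -> exists k, k != 0 /\ pan (x * u ^+ 2) = pan x * k ^+ 2.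
Proof. by case: pan_axioms => [_ [_ [_ [_ [_ [_ [_ h]]]]]]]; apply: h. Qed.

Lemma Phi_intro x a :
  A x -> x != 0 -> val x = Some a -> admissible (unit_vals val A) g a -> M (pan x) -> Phi x.
Proof. by move=> Ax nx Ex [Ca Ha] Mx; right; split; [|split; [|exists a]]. Qed.

Lemma Phi_add_lt x y a b :
  A x -> x != 0 -> val x = Some a -> admissible (unit_vals val A) g a -> M (pan x) ->
  A y -> val y = Some b -> glt a b -> x + y != 0 -> Phi (x + y).
Proof.
move=> Ax nx Ex adm_a Mx Ay Ey lt_ab nxy.
apply: (Phi_intro (a := a)) => //; first exact: subringD.
- exact: val_add_lt Ex Ey lt_ab nxy.
- by rewrite (pan_add_lt Ex Ey nxy lt_ab).
Qed.

Lemma Phi_add x y : Phi x -> Phi y -> Phi (x + y).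
Proof.
move=> Px Py; have [->|nx] := eqVneq x 0; first by rewrite add0r.
have [->|ny] := eqVneq y 0; first by rewrite addr0.
have [->|nxy] := eqVneq (x + y) 0; first by left.
case: Px => [x0|[Ax [_ [a [Ex Ca Ha Mx]]]]]; first by rewrite x0 eqxx in nx.
case: Py => [y0|[Ay [_ [b [Ey Cb Hb My]]]]]; first by rewrite y0 eqxx in ny.
case: (classic (glt a b)) => [lt_ab|/nglt_le b_le_a].
  exact: Phi_add_lt Ex (conj Ca Ha) Mx Ay Ey lt_ab nxy.
case: (classic (glt b a)) => [lt_ba|/nglt_le a_le_b].
  by rewrite addrC in nxy *; exact: Phi_add_lt Ey (conj Cb Hb) My Ax Ex lt_ba nxy.
move: Ey My; rewrite (gle_anti b_le_a a_le_b) => Ey My.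
have pan_sum_nz : pan x + pan y != 0.
  rewrite addr_eq0; apply/eqP => pan_x.
  by apply: (qq_module_no_opposite two_nz M_qq M_proper (pan_neq0 ny) My); rewrite -pan_x.
have [Exy pan_xy] := pan_add_eq Ex Ey nxy pan_sum_nz.
apply: (Phi_intro (a := a)) => //; first exact: subringD.
by rewrite pan_xy; case: M_qq => M_add _; apply: M_add.
Qed.

Lemma Phi_mul_sq u x : A u -> Phi x -> Phi (u ^+ 2 * x).
Proof.
move=> Au Px; have [->|nu] := eqVneq u 0; first by left; rewrite expr0n mul0r.
case: Px => [->|[Ax [nx [a [Ex Ca Ha Mx]]]]]; first by left; rewrite mulr0.
have [b Eu] := val_some val_valuation nu.
apply: (Phi_intro (a := gmul (gmul b b) a)).
- by apply: subringM => //; rewrite expr2; apply: subringM.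
- by rewrite mulf_neq0 // expf_neq0.
- by rewrite expr2 (valM val_valuation (valM val_valuation Eu Eu) Ex).
- exact: admissible_unit_vals_mul_sq Au Eu (conj Ca Ha).
- have [k [_ pan_k]] := pan_mul_sq nx nu.
  by rewrite mulrC pan_k mulrC; case: M_qq => _ M_sq; apply: M_sq.
Qed.

End PhiModule.

Theorem mainTheorem4 (G : ordered_abelian_group) (K F : fieldType)
  (val : K -> option G) (pi : K -> F) (pan : K -> F) (A : K -> Prop)
  (g : G) (M : F -> Prop) :
  is_valuation val ->
  is_residue_map val pi ->
  (2 : F) != 0 ->
  two_henselian val pi ->
  is_subring A ->
  (forall x, val_ring val x -> A x) ->
  is_pseudo_angular val pi pan ->
  qq_module M ->
  (exists c : F, ~ M c) ->
  qq_module_in A (Phi val A pan M g).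
Proof.
move=> val_valuation _ two_nz _ A_subring B_sub_A pan_axioms M_qq M_proper.
split.
- by move=> x [->|[Ax _]] //; case: A_subring.
- exact: Phi_add val_valuation two_nz A_subring pan_axioms M_qq M_proper.
- exact: Phi_mul_sq val_valuation A_subring B_sub_A pan_axioms M_qq.
Qed.
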